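(* Let $\langle S,L,\tau,\ell\rangle$ be a labelled Markov chain and let $R$ be a bisimulation with $\simeq\,\subseteq R\subseteq\,\sim$. Then $\mathrm{Refine}(R)$ is a bisimulation with $\simeq\,\subseteq\mathrm{Refine}(R)\subseteq\,\sim$.
   Context: Labelled Markov chain $\langle S,L,\tau,\ell\rangle$: finite $S$, finite $L$, $\tau:S\to\mathcal{D}(S)$, $\ell:S\to L$, $|\ell(S)|\ge2$. $\Omega(\mu,\nu)$ = couplings (distributions on $S\times S$ with marginals $\mu,\nu$). A bisimulation is an equivalence relation $R\subseteq S\times S$ such that for all $(s,t)\in R$, $\ell(s)=\ell(t)$ and some $\omega\in\Omega(\tau(s),\tau(t))$ has $\mathrm{support}(\omega)\subseteq R$; $\sim$ is bisimilarity. $S^2_\Delta=\{(s,s)\}$, $S^2_1=\{(s,t)\mid\ell(s)\ne\ell(t)\}$. A policy is $P:S\times S\to\mathcal{D}(S\times S)$ with $P(s,t)\in\Omega(\tau(s),\tau(t))$ for $(s,t)\notin S^2_1$ and $P(s,t)$ the point mass at $(s,t)$ for $(s,t)\in S^2_1$; $\mathcal{P}$ = set of policies, inducing Markov chains $\langle S\times S,P\rangle$. Robust bisimilarity: $s\simeq t$ iff some $P\in\mathcal{P}$ makes $(s,t)$ reach $S^2_\Delta$ with probability $1$. $R$ supports a path $(u_1,v_1)\dots(u_n,v_n)$ if $(u_i,v_i)\in R$ and $\mathrm{support}(P(u_i,v_i))\subseteq R$ for all $i$. $\mathrm{Filter}(R)=\{(s,t)\in R\mid\exists P\in\mathcal{P}$: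 $R$ supports a path from $(s,t)$ to $S^2_\Delta\}$; $\mathrm{Prune}(R)=\{(s,t)\in R\mid\forall u:((t,u)\in R\Rightarrow(s,u)\in R)\wedge((u,s)\in R\Rightarrow(u,t)\in R)\}$; $\mathrm{Bisim}(R)$ = largest bisimulation contained in $R$; $\mathrm{Refine}(R)=\mathrm{Bisim}(\mathrm{Prune}(\mathrm{Filter}(R)))$. *)

From mathcomp Require Import all_boot all_order all_algebra.
From mathcomp Require Import reals.
Set Implicit Arguments. Unset Strict Implicit. Unset Printing Implicit Defensive.
Import Order.TTheory GRing.Theory Num.Theory.
Local Open Scope ring_scope.

Notation relS S := (S -> S -> Prop).

Section LMC.
Variable (R : realType) (S : finType) (L : Type).
Variables (tau : S -> S -> R) (ell : S -> L).

Local Notation relS := (S -> S -> Prop).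

Definition is_distr (T : finType) (mu : T -> R) : Prop :=
  (forall x, 0 <= mu x) /\ \sum_(x : T) mu x = 1.

Definition is_LMC : Prop := forall s, is_distr (tau s).

Definition coupling (mu nu : S -> R) (om : S * S -> R) : Prop :=
  is_distr om /\
  (forall u, \sum_(v : S) om (u, v) = mu u) /\
  (forall v, \sum_(u : S) om (u, v) = nu v).

Definition support_in (om : S * S -> R) (Q : relS) : Prop :=
  forall u v, om (u, v) != 0 -> Q u v.

Definition equivalence (Q : relS) : Prop :=
  (forall s, Q s s) /\ (forall s t, Q s t -> Q t s) /\
  (forall s t u, Q s t -> Q t u -> Q s u).

Definition rel_incl (Q1 Q2 : relS) : Prop := forall s t, Q1 s t -> Q2 s t.

Definition bisimulation (Q : relS) : Prop :=
  equivalence Q /\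
  forall s t, Q s t -> ell s = ell t /\
    exists om, coupling (tau s) (tau t) om /\ support_in om Q.

Definition bisimilar : relS := fun s t => exists Q, bisimulation Q /\ Q s t.

Definition diag (x : S * S) : Prop := x.1 = x.2.
Definition S21 (x : S * S) : Prop := ell x.1 <> ell x.2.

Definition point_mass (x : S * S) : S * S -> R :=
  fun y => if y == x then 1 else 0.

Definition policy (P : S * S -> S * S -> R) : Prop :=
  forall x : S * S,
    (~ S21 x -> coupling (tau x.1) (tau x.2) (P x)) /\
    (S21 x -> P x = point_mass x).

Fixpoint reach_within (P : S * S -> S * S -> R) (n : nat) (x : S * S) : R :=
  match n with
  | 0 => if x.1 == x.2 then 1 else 0
  | n'.+1 => if x.1 == x.2 then 1
             else \sum_(y : S * S) P x y * reach_within P n' y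
  end.

(* probability of (eventually) reaching the diagonal equals 1, i.e. the
   supremum over n of the (nondecreasing) bounded-step probabilities is 1 *)
Definition reaches_diag_as (P : S * S -> S * S -> R) (x : S * S) : Prop :=
  forall eps : R, 0 < eps -> exists n, 1 - eps < reach_within P n x.

Definition robust : relS := fun s t =>
  exists P, policy P /\ reaches_diag_as P (s, t).

Inductive supported_reach (Q : relS) (P : S * S -> S * S -> R) : S * S -> Prop :=
  | sr_base x : diag x -> Q x.1 x.2 -> support_in (P x) Q ->
      supported_reach Q P x
  | sr_step x y : Q x.1 x.2 -> support_in (P x) Q -> 0 < P x y ->
      supported_reach Q P y -> supported_reach Q P x.

Definition Filter (Q : relS) : relS := fun s t =>
  Q s t /\ exists P, policy P /\ supported_reach Q P (s, t).

Definition Prune (Q : relS) : relS := fun s t =>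
  Q s t /\ forall u, (Q t u -> Q s u) /\ (Q u s -> Q u t).

Definition Bisim (Q : relS) : relS := fun s t =>
  exists B, bisimulation B /\ rel_incl B Q /\ B s t.

Definition Refine (Q : relS) : relS := Bisim (Prune (Filter Q)).

End LMC.

From mathcomp Require Import all_boot all_order all_algebra.
From mathcomp Require Import reals.
From mathcomp Require Import lra.
From Stdlib Require Import Classical ClassicalEpsilon Relation_Operators Wf_nat.
Set Implicit Arguments. Unset Strict Implicit. Unset Printing Implicit Defensive.
Import Order.TTheory GRing.Theory Num.Theory.
Local Open Scope ring_scope.

(* [Refine Q] is the union of the bisimulations inside [Prune (Filter Q)], which
   is an equivalence because [Q] is.  The equivalence closure of any relation
   whose pairs have equal labels and a coupling of their successor
   distributions supported in the relation is a bisimulation (couplings are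
   transposed for symmetry and glued along the middle marginal for
   transitivity); hence that union is a bisimulation, and it contains robust
   bisimilarity as soon as robust bisimilarity, which has this coupling
   property, lies in [Prune (Filter Q)].
   A pair is in [Filter Q] iff the diagonal is reachable through Q-pairs along
   Q-supported couplings that may differ at each visit, because a single
   policy can play the coupling of a shortest such path.  A robust pair reaches
   the diagonal with positive probability through robust, hence Q-, pairs; and
   if [s] is robustly bisimilar to [t], a coupled path from [t] is transported
   to one from [s] by gluing with a coupling of [tau s] and [tau t] supported in
   robust bisimilarity, which is the pruning condition. *)

Section Couplings.
Variables (R : realType) (S : finType).
Implicit Types (mu nu : S -> R) (om : S * S -> R) (B : relS S).

Lemma sum_pair (f : S * S -> R) :
  \sum_(p : S * S) f p = \sum_(i : S) \sum_(j : S) f (i, j).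
Proof. by rewrite pair_big; apply: eq_bigr => -[]. Qed.

Lemma coupling_of_marginals mu nu om : is_distr mu -> (forall x, 0 <= om x) ->
  (forall u, \sum_(v : S) om (u, v) = mu u) ->
  (forall v, \sum_(u : S) om (u, v) = nu v) -> coupling mu nu om.
Proof.
move=> [_ hmu] om0 om1 om2; split; [split=> // | by split].
by rewrite sum_pair -hmu; apply: eq_bigr => u _; rewrite om1.
Qed.

Lemma coupling_distr_l mu nu om : coupling mu nu om -> is_distr mu.
Proof.
move=> [[om0 om1] [hmu _]]; split.
  by move=> u; rewrite -hmu; apply: sumr_ge0.
by rewrite -om1 sum_pair; apply: eq_bigr => u _; rewrite hmu.
Qed.

Lemma coupling_distr_r mu nu om : coupling mu nu om -> is_distr nu.
Proof.
move=> [[om0 om1] [_ hnu]]; split.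
  by move=> v; rewrite -hnu; apply: sumr_ge0.
by rewrite -om1 sum_pair exchange_big; apply: eq_bigr => v _; rewrite hnu.
Qed.

Lemma coupling_swap mu nu om : coupling mu nu om ->
  coupling nu mu (fun x => om (x.2, x.1)).
Proof.
move=> c; have [[om0 _] [hmu hnu]] := c.
exact: coupling_of_marginals (coupling_distr_r c) _ hnu hmu.
Qed.

Lemma coupling_gt0_l mu nu om a b : coupling mu nu om -> 0 < om (a, b) -> 0 < mu a.
Proof.
move=> [[om0 _] [hmu _]] pab; rewrite -hmu (bigD1 b) //=.
by rewrite ltr_wpDr // sumr_ge0.
Qed.

Lemma coupling_gt0_r mu nu om a b : coupling mu nu om -> 0 < om (a, b) -> 0 < nu b.
Proof. by move/coupling_swap; apply: coupling_gt0_l. Qed.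

Lemma coupling_witness_r mu nu om b : coupling mu nu om -> 0 < nu b ->
  exists a, 0 < om (a, b).
Proof.
move=> [[om0 _] [_ hnu]] pb.
have [a /andP [_ pa]] : exists a, true && (0 < om (a, b)).
  by apply: psumr_neq0P => //; rewrite hnu; apply/eqP; rewrite lt0r_neq0.
by exists a.
Qed.

Lemma support_in_mono om B1 B2 :
  support_in om B1 -> rel_incl B1 B2 -> support_in om B2.
Proof. by move=> h12 h u v /h12 /h. Qed.

Definition diag_coupling mu (x : S * S) : R := if x.1 == x.2 then mu x.1 else 0.

Lemma diag_coupling_coupling mu : is_distr mu -> coupling mu mu (diag_coupling mu).
Proof.
move=> hmu; have [mu0 _] := hmu; rewrite /diag_coupling.
apply: coupling_of_marginals => //= [x|u|v]; first by case: ifP.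
  by rewrite (bigD1 u) //= eqxx big1 ?addr0 // => v /negbTE; rewrite eq_sym => ->.
by rewrite (bigD1 v) //= eqxx big1 ?addr0 // => u /negbTE ->.
Qed.

Lemma support_diag_coupling mu B : (forall s, B s s) -> support_in (diag_coupling mu) B.
Proof.
move=> hB u v; rewrite /diag_coupling /=.
by have [-> _|_] := eqVneq u v; [apply: hB | rewrite eqxx].
Qed.

Definition prod_coupling mu nu (x : S * S) : R := mu x.1 * nu x.2.

Lemma prod_coupling_coupling mu nu : is_distr mu -> is_distr nu ->
  coupling mu nu (prod_coupling mu nu).
Proof.
move=> [mu0 mu1] [nu0 nu1]; rewrite /prod_coupling.
apply: coupling_of_marginals => //= [x|u|v]; first by rewrite mulr_ge0.
  by rewrite -mulr_sumr nu1 mulr1.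
by rewrite -mulr_suml mu1 mul1r.
Qed.

(* Gluing two couplings along their common marginal [nu]: the composite of the
   conditional kernels [om1 (a, .)] and [om2 (b, .) / nu b]; the junk value
   [x / 0 = 0] is harmless since [nu b = 0] forces [om1 (a, b) = 0]. *)
Definition glue nu om1 om2 (x : S * S) : R :=
  \sum_(b : S) om1 (x.1, b) * om2 (b, x.2) / nu b.

Section Glue.
Variables (mu nu rho : S -> R) (om1 om2 : S * S -> R).
Hypotheses (c1 : coupling mu nu om1) (c2 : coupling nu rho om2).

Let nu_ge0 b : 0 <= nu b.
Proof. by have [nu0 _] := coupling_distr_r c1. Qed.

Let om1_eq0 a b : nu b = 0 -> om1 (a, b) = 0.
Proof.
have [[om0 _] [_ hnu]] := c1; move=> nub.
by apply: (psumr_eq0P (P := predT) (F := fun a => om1 (a, b))); rewrite ?hnu.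
Qed.

Let om2_eq0 b c : nu b = 0 -> om2 (b, c) = 0.
Proof.
have [[om0 _] [hnu _]] := c2; move=> nub.
by apply: (psumr_eq0P (P := predT) (F := fun c => om2 (b, c))); rewrite ?hnu.
Qed.

Lemma glue_coupling : coupling mu rho (glue nu om1 om2).
Proof.
have [[a0 _] [a1 a2]] := c1; have [[b0 _] [b1 b2]] := c2.
apply: coupling_of_marginals; first exact: coupling_distr_l c1.
- move=> x; apply: sumr_ge0 => b _.
  by rewrite mulr_ge0 ?invr_ge0 ?nu_ge0 ?mulr_ge0.
- move=> u; rewrite /glue /= exchange_big /= -a1; apply: eq_bigr => b _.
  under eq_bigr do rewrite mulrAC.
  rewrite -mulr_sumr b1; have [nub|nub] := eqVneq (nu b) 0.
    by rewrite om1_eq0 // !mul0r.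
  by rewrite divfK.
- move=> v; rewrite /glue /= exchange_big /= -b2; apply: eq_bigr => b _.
  under eq_bigr do rewrite -mulrA mulrC.
  rewrite -mulr_sumr a2; have [nub|nub] := eqVneq (nu b) 0.
    by rewrite om2_eq0 // !mul0r.
  by rewrite divfK.
Qed.

Lemma support_glue B1 B2 B3 : support_in om1 B1 -> support_in om2 B2 ->
  (forall a b c, B1 a b -> B2 b c -> B3 a c) -> support_in (glue nu om1 om2) B3.
Proof.
move=> s1 s2 comp a c; rewrite /glue /= => hn.
have [b hb] : exists b, om1 (a, b) * om2 (b, c) / nu b != 0.
  apply/existsP; apply: contraNT hn; rewrite negb_exists => /forallP h.
  by apply/eqP; apply: big1 => b _; apply/eqP; have := h b; rewrite negbK.
by apply: (comp _ b); [apply: s1 | apply: s2];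
  apply: contraNneq hb => ->; rewrite ?(mul0r, mulr0).
Qed.

Lemma glue_gt0 a b c : 0 < om1 (a, b) -> 0 < om2 (b, c) ->
  0 < glue nu om1 om2 (a, c).
Proof.
have [[a0 _] _] := c1; have [[b0 _] _] := c2.
move=> p1 p2; rewrite /glue /= (bigD1 b) //=.
rewrite ltr_wpDr ?divr_gt0 ?mulr_gt0 ?(coupling_gt0_r c1 p1) //.
by apply: sumr_ge0 => i _; rewrite mulr_ge0 ?invr_ge0 ?nu_ge0 ?mulr_ge0.
Qed.

End Glue.
End Couplings.

Section LabelledMarkovChain.
Variables (R : realType) (S : finType) (L : Type).
Variables (tau : S -> S -> R) (ell : S -> L).
Hypothesis hLMC : is_LMC tau.
Implicit Types (B X : relS S) (P : S * S -> S * S -> R).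

Definition coupling_closed B : Prop :=
  forall a b, B a b -> ell a = ell b /\
    exists om, coupling (tau a) (tau b) om /\ support_in om B.

Lemma coupling_closedU B1 B2 : coupling_closed B1 -> coupling_closed B2 ->
  coupling_closed (fun a b => B1 a b \/ B2 a b).
Proof.
move=> h1 h2 a b [/h1|/h2] [lab [om [c sp]]]; split=> //; exists om; split=> //.
  by apply: support_in_mono sp _ => u v; left.
by apply: support_in_mono sp _ => u v; right.
Qed.

Lemma coupling_closed_flip B : coupling_closed B -> coupling_closed (fun a b => B b a).
Proof.
move=> hB a b /hB [lab [om [c sp]]]; split=> //.
by exists (fun x => om (x.2, x.1)); split; [apply: coupling_swap | move=> u v /sp].
Qed.

Lemma equiv_closure_bisimulation B :
  coupling_closed B -> bisimulation tau ell (clos_refl_sym_trans S B).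
Proof.
move=> hB; split; first by split; [exact: rst_refl | split; [exact: rst_sym | exact: rst_trans]].
move=> a b; elim=> {a b} [a b /hB [lab [om [c sp]]] | a | a b _ [lab [om [c sp]]]
  | a b d _ [lab1 [om1 [c1 sp1]]] _ [lab2 [om2 [c2 sp2]]]].
- by split=> //; exists om; split=> //; apply: support_in_mono sp _; exact: rst_step.
- split=> //; exists (diag_coupling (tau a)); split; first exact: diag_coupling_coupling.
  by apply: support_diag_coupling; apply: rst_refl.
- split=> //; exists (fun x => om (x.2, x.1)); split; first exact: coupling_swap.
  by move=> u v /sp; apply: rst_sym.
- split; first by rewrite lab1 lab2.
  exists (glue (tau b) om1 om2); split; first exact: glue_coupling c1 c2.
  by apply: support_glue sp1 sp2 _; apply: rst_trans.
Qed.

Lemma equiv_closure_incl B X : equivalence X -> rel_incl B X ->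
  rel_incl (clos_refl_sym_trans S B) X.
Proof.
move=> [Xrefl [Xsym Xtrans]] hBX a b.
by elim=> {a b} [a b /hBX | a | a b _ /Xsym | a b d _ hab _] //; apply: Xtrans.
Qed.

Lemma bisimulation_coupling_closed B : bisimulation tau ell B -> coupling_closed B.
Proof. by case. Qed.

Lemma Bisim_bisimulation X : equivalence X -> bisimulation tau ell (Bisim tau ell X).
Proof.
move=> hX.
have closure_Bisim B : coupling_closed B -> rel_incl B X ->
    rel_incl (clos_refl_sym_trans S B) (Bisim tau ell X).
  move=> hB hBX a b ab; exists (clos_refl_sym_trans S B).
  by split; [exact: equiv_closure_bisimulation | split=> //; exact: equiv_closure_incl].
split; first split.
- by move=> s; apply: (closure_Bisim (fun _ _ => False)) => //; apply: rst_refl.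
- split=> [s t [B [hB [BX st]]] | s t u [B1 [hB1 [B1X st]]] [B2 [hB2 [B2X tu]]]].
    by exists B; have [[_ [Bsym _]] _] := hB; split=> //; split=> //; apply: Bsym.
  apply: (closure_Bisim (fun a b => B1 a b \/ B2 a b)).
  + by apply: coupling_closedU; apply: bisimulation_coupling_closed.
  + by move=> a b [/B1X | /B2X].
  + by apply: rst_trans (rst_step _ _ _ _ _) (rst_step _ _ _ _ _); [left; exact: st | right; exact: tu].
- move=> s t [B [hB [BX st]]]; have [lab [om [c sp]]] := bisimulation_coupling_closed hB st.
  split=> //; exists om; split=> //.
  by apply: support_in_mono sp _ => u v uv; exists B.
Qed.

Lemma Prune_trans X s t u : Prune X s t -> Prune X t u -> Prune X s u.
Proof.
move=> [_ st] [tu tu']; split; first exact: (st u).1.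
by move=> w; split=> [/(tu' w).1 /(st w).1 | /(st w).2 /(tu' w).2].
Qed.

Lemma Prune_equivalence X : (forall s, X s s) -> (forall s t, X s t -> X t s) ->
  equivalence (Prune X).
Proof.
move=> Xrefl Xsym; split; first by move=> s; split.
split; last exact: Prune_trans.
move=> s t [/Xsym ts st']; split=> // u.
by split=> /Xsym h; apply: Xsym; [apply: (st' u).2 | apply: (st' u).1].
Qed.

Lemma policy_distr P x : policy tau ell P -> is_distr (P x).
Proof.
move=> hP; have [coupP massP] := hP x.
case: (classic (S21 ell x)) => [/massP -> | /coupP [] //].
split; first by move=> y; rewrite /point_mass; case: ifP.
by rewrite /point_mass -big_mkcond /= big_pred1_eq.
Qed.

Lemma reach_within_bounds P n x : policy tau ell P -> 0 <= reach_within P n x <= 1.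
Proof.
move=> hP; elim: n x => [|n IH] x /=; first by case: ifP; rewrite ?lexx ?ler01.
case: ifP => _; first by rewrite lexx ler01.
have [P0 P1] := policy_distr x hP.
apply/andP; split; first by apply: sumr_ge0 => y _; rewrite mulr_ge0 //; case/andP: (IH y).
by rewrite -P1; apply: ler_sum => y _; rewrite ler_piMr //; case/andP: (IH y).
Qed.

Lemma reach_within_S21 P n x : policy tau ell P -> S21 ell x -> reach_within P n x = 0.
Proof.
move=> hP x21; have xnd : x.1 != x.2 by apply: contra_notN x21 => /eqP ->.
elim: n => [|n IH] /=; rewrite (negbTE xnd) //.
rewrite ((hP x).2 x21) (bigD1 x) //= /point_mass eqxx mul1r IH add0r.
by rewrite big1 // => y /negbTE ->; rewrite mul0r.
Qed.

Lemma reaches_diag_label P x : policy tau ell P -> reaches_diag_as P x ->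
  ell x.1 = ell x.2.
Proof.
move=> hP hx; apply: NNPP => x21; have [n] := hx 1 ltr01.
by rewrite (reach_within_S21 n hP x21) subrr ltxx.
Qed.

Lemma reaches_diag_refl P u : reaches_diag_as P (u, u).
Proof. by move=> e e0; exists 0%N; rewrite /= eqxx; lra. Qed.

(* A reach probability [1 - e * P x y] from [x] forces [1 - e] from [y]. *)
Lemma reaches_diag_succ P x y : policy tau ell P -> reaches_diag_as P x ->
  x.1 != x.2 -> 0 < P x y -> reaches_diag_as P y.
Proof.
move=> hP hx xnd py; have [P0 P1] := policy_distr x hP.
have rest : \sum_(z | z != y) P x z = 1 - P x y.
  by move: P1; rewrite (bigD1 y) //= => <-; rewrite addrAC subrr add0r.
have py1 : P x y <= 1 by rewrite -P1 (bigD1 y) //= lerDl sumr_ge0.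
suff small_eps e : 0 < e < 1 -> exists n, 1 - e < reach_within P n y.
  move=> e e0; have [e1|e1] := ltP e 1; first by apply: small_eps; rewrite e0 e1.
  by have [n ?] := small_eps 2^-1 ltac:(apply/andP; split; lra); exists n; lra.
case/andP=> e0 e1; have [[|n] hn] := hx (e * P x y) (mulr_gt0 e0 py).
  by move: hn; rewrite /= (negbTE xnd); nra.
exists n; move: hn => /=; rewrite (negbTE xnd) (bigD1 y) //=.
have : \sum_(z | z != y) P x z * reach_within P n z <= 1 - P x y.
  rewrite -rest; apply: ler_sum => z _.
  by rewrite ler_piMr //; case/andP: (reach_within_bounds n z hP).
nra.
Qed.

Lemma robust_coupling_closed : coupling_closed (robust tau ell).
Proof.
move=> s t [P [hP hst]]; split; first exact: (reaches_diag_label hP hst).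
have [<-|st] := eqVneq s t.
  exists (diag_coupling (tau s)); split; first exact: diag_coupling_coupling.
  by apply: support_diag_coupling => u; exists P; split=> //; apply: reaches_diag_refl.
have not21 : ~ S21 ell (s, t) by move=> /(_ (reaches_diag_label hP hst)).
have [P0 _] := policy_distr (s, t) hP.
exists (P (s, t)); split; first exact: (hP (s, t)).1.
move=> u v uv; exists P; split=> //; apply: reaches_diag_succ hP hst st _.
by rewrite lt0r uv P0.
Qed.

Lemma policy_choice (spec : S * S -> (S * S -> R) -> Prop) :
  (forall x, ~ S21 ell x -> x.1 != x.2 ->
     exists om, coupling (tau x.1) (tau x.2) om /\ spec x om) ->
  exists P, policy tau ell P /\
    (forall x, x.1 = x.2 -> P x = diag_coupling (tau x.1)) /\
    (forall x, ~ S21 ell x -> x.1 != x.2 -> spec x (P x)).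
Proof.
move=> hspec.
pose P x := if excluded_middle_informative (S21 ell x) then point_mass R x
  else if x.1 == x.2 then diag_coupling (tau x.1)
  else epsilon (inhabits (fun _ => 0))
         (fun om => coupling (tau x.1) (tau x.2) om /\ spec x om).
have P_spec x : ~ S21 ell x -> x.1 != x.2 ->
    coupling (tau x.1) (tau x.2) (P x) /\ spec x (P x).
  move=> x21 xnd; rewrite /P.
  destruct (excluded_middle_informative (S21 ell x)) => //.
  by rewrite (negbTE xnd); exact: (epsilon_spec _ _ (hspec x x21 xnd)).
have P_diag x : x.1 = x.2 -> P x = diag_coupling (tau x.1).
  rewrite /P => e; destruct (excluded_middle_informative (S21 ell x)) as [x21|x21].
    by case: x21; rewrite e.
  by rewrite e eqxx.
exists P; split; last by split=> // x x21 xnd; case: (P_spec x x21 xnd).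
move=> x; split=> [x21|]; last by rewrite /P; destruct (excluded_middle_informative (S21 ell x)).
have [e|xnd] := eqVneq x.1 x.2; last by case: (P_spec x x21 xnd).
by rewrite P_diag // -e; apply: diag_coupling_coupling.
Qed.

Section Filter.
Variable Q : relS S.
Hypothesis hQ : bisimulation tau ell Q.
Hypothesis robust_Q : rel_incl (robust tau ell) Q.

Let Q_refl s : Q s s. Proof. by case: hQ => -[]. Qed.
Let Q_sym s t : Q s t -> Q t s. Proof. by case: hQ => -[_ [Qsym _]] _; apply: Qsym. Qed.
Let Q_trans s t u : Q s t -> Q t u -> Q s u.
Proof. by case: hQ => -[_ [_ Qtrans]] _; apply: Qtrans. Qed.
Let Q_label s t : Q s t -> ell s = ell t. Proof. by case: hQ => _ hc /hc []. Qed.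

(* Like [supported_reach], but the coupling may change at every visit of a
   pair; [Filter] fixes one coupling per pair through its policy. *)
Fixpoint coupled_reach (n : nat) (x : S * S) : Prop :=
  match n with
  | 0 => x.1 = x.2 /\ Q x.1 x.2
  | n'.+1 => coupled_reach n' x \/ (Q x.1 x.2 /\
      exists om y, coupling (tau x.1) (tau x.2) om /\ support_in om Q /\
        0 < om y /\ coupled_reach n' y)
  end.

Definition coupled_reachable (x : S * S) : Prop := exists n, coupled_reach n x.

Lemma coupled_reach_mono m n x : (m <= n)%N -> coupled_reach m x -> coupled_reach n x.
Proof. by move=> /subnK <-; elim: (n - m)%N => [|k IH] // /IH; left. Qed.

Lemma coupled_reach_Q n x : coupled_reach n x -> Q x.1 x.2.
Proof. by elim: n x => [|n IH] x /= => [[]|[/IH|[]]]. Qed.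

Lemma coupled_reachable_Q x : coupled_reachable x -> Q x.1 x.2.
Proof. by case=> n /coupled_reach_Q. Qed.

Lemma coupled_reachable_diag x : x.1 = x.2 -> coupled_reachable x.
Proof. by move=> e; exists 0%N; split; rewrite // e. Qed.

Lemma coupled_reachable_step x om y : Q x.1 x.2 ->
  coupling (tau x.1) (tau x.2) om -> support_in om Q -> 0 < om y ->
  coupled_reachable y -> coupled_reachable x.
Proof. by move=> q c sp p [n hn]; exists n.+1; right; split=> //; exists om, y. Qed.

Lemma coupled_reach_swap n x : coupled_reach n x -> coupled_reach n (x.2, x.1).
Proof.
elim: n x => [|n IH] x /=; first by case=> e /Q_sym; split; rewrite ?e.
case=> [/IH|[q [om [[a b] [c [sp [p hy]]]]]]]; first by left.
right; split; first exact: Q_sym.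
exists (fun z => om (z.2, z.1)), (b, a); split; first exact: coupling_swap.
by split; [move=> u v /sp /Q_sym | split=> //; apply: IH hy].
Qed.

Lemma supported_reach_coupled P x : policy tau ell P ->
  supported_reach Q P x -> coupled_reachable x.
Proof.
move=> hP; elim=> {x} [x d q _ | x y q sp p _ IH]; first exact: coupled_reachable_diag.
have not21 : ~ S21 ell x by apply; apply: Q_label.
exact: coupled_reachable_step q ((hP x).1 not21) sp p IH.
Qed.

(* The policy plays, at each reachable pair, the coupling of a shortest
   coupled path to the diagonal. *)
Lemma coupled_reach_policy : exists P, policy tau ell P /\
  forall n x, coupled_reach n x -> supported_reach Q P x.
Proof.
pose spec x (om : S * S -> R) := coupled_reachable x -> support_in om Q /\
  exists y, 0 < om y /\ forall n, coupled_reach n.+1 x -> coupled_reach n y.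
have [|P [hP [P_diag P_spec]]] := @policy_choice spec.
  move=> x _ xnd; case: (classic (coupled_reachable x)) => [[n hn] | unreach]; last first.
    exists (prod_coupling (tau x.1) (tau x.2)).
    by split=> //; apply: prod_coupling_coupling.
  have [m [[hm m_least] _]] := dec_inh_nat_subset_has_unique_least_element
    _ (fun k => classic (coupled_reach k x)) (ex_intro _ n hn).
  case: m hm m_least => [[e _] | k [hk | [_ [om [y [c [sp [p hy]]]]]]] k_least].
  - by rewrite e eqxx in xnd.
  - by have /ssrnat.leP := k_least _ hk; rewrite ltnn.
  exists om; split=> // _; split=> //; exists y; split=> // n' hn'.
  by apply: coupled_reach_mono hy; have /ssrnat.leP := k_least _ hn'.
have support_diag x : x.1 = x.2 -> support_in (P x) Q.
  by move=> e; rewrite P_diag //; apply: support_diag_coupling.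
exists P; split=> // n; elim: n => [|n IH] x hx.
  by case: hx => e q; apply: sr_base => //; apply: support_diag.
have q := coupled_reach_Q hx.
have [e|xnd] := eqVneq x.1 x.2; first by apply: sr_base => //; apply: support_diag.
have not21 : ~ S21 ell x by apply; apply: Q_label.
have [sp [y [p hy]]] := P_spec x not21 xnd (ex_intro (coupled_reach^~ x) _ hx).
exact: sr_step q sp p (IH _ (hy _ hx)).
Qed.

Lemma Filter_coupled_reachable s t : Filter tau ell Q s t <-> coupled_reachable (s, t).
Proof.
split=> [[_ [P [hP hst]]] | [n hn]]; first exact: supported_reach_coupled hP hst.
have [P [hP P_supp]] := coupled_reach_policy.
by split; [apply: coupled_reach_Q hn | exists P; split=> //; apply: P_supp hn].
Qed.

Lemma robust_coupled_reachable s t : robust tau ell s t -> coupled_reachable (s, t).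
Proof.
move=> [P [hP hst]].
suff reach_gt0 n x : reaches_diag_as P x -> 0 < reach_within P n x -> coupled_reachable x.
  by have [n hn] := hst 1 ltr01; apply: (reach_gt0 n) => //; lra.
elim: n x => [|n IH] x hx /=.
  by case: eqP => [e _|_]; [apply: coupled_reachable_diag | rewrite ltxx].
have [e _|xnd hpos] := eqVneq x.1 x.2; first exact: coupled_reachable_diag.
have [P0 _] := policy_distr x hP.
have [y /andP [_ pry]] : exists y, true && (0 < P x y * reach_within P n y).
  apply: psumr_neq0P => [z _|]; last by move=> h; rewrite h ltxx in hpos.
  by rewrite mulr_ge0 //; case/andP: (reach_within_bounds n z hP).
have py : 0 < P x y by rewrite lt0r P0 andbT; apply: contraTneq pry => ->; rewrite mul0r ltxx.
have not21 : ~ S21 ell x by apply; apply: (reaches_diag_label hP hx).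
have ry : 0 < reach_within P n y by rewrite -(pmulr_rgt0 _ py).
have hy := reaches_diag_succ hP hx xnd py.
apply: (coupled_reachable_step (om := P x) (y := y)) py (IH _ hy ry).
- by apply: robust_Q; exists P; rewrite -surjective_pairing.
- exact: (hP x).1.
- move=> u v uv; apply: robust_Q; exists P; split=> //.
  by apply: reaches_diag_succ hP hx xnd _; rewrite lt0r uv P0.
Qed.

(* Given [B s t], the coupling of [s] with [t] along [B] is glued to the
   coupled path from [t] to the diagonal, one step at a time. *)
Lemma coupled_reachable_transfer B : coupling_closed B ->
  (forall s t, B s t -> coupled_reachable (s, t)) ->
  forall s t u, B s t -> coupled_reachable (t, u) -> coupled_reachable (s, u).
Proof.
move=> hB B_reach s t u st [n]; elim: n s t u st => [|n IH] s t u st /=.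
  by case=> /= <- _; apply: B_reach.
case=> [|[/= tu [om2 [[t1 u1] [c2 [sp2 [p2 hy]]]]]]]; first exact: IH.
have B_Q a b : B a b -> Q a b by move/B_reach/coupled_reachable_Q.
have [_ [om1 [c1 sp1]]] := hB _ _ st.
have [a pa] := coupling_witness_r c1 (coupling_gt0_l c2 p2).
apply: (coupled_reachable_step (om := glue (tau t) om1 om2) (y := (a, u1))).
- exact: Q_trans (B_Q _ _ st) tu.
- exact: glue_coupling c1 c2.
- by apply: support_glue sp1 sp2 _ => x y z /B_Q; apply: Q_trans.
- exact: (glue_gt0 c1 c2 pa p2).
- by apply: IH hy; apply: sp1; rewrite gt_eqF.
Qed.

Lemma robust_Prune_Filter s t : robust tau ell s t -> Prune (Filter tau ell Q) s t.
Proof.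
move=> st; split; first exact/Filter_coupled_reachable/robust_coupled_reachable.
have robust_flip_reach a b : robust tau ell b a -> coupled_reachable (a, b).
  by move/robust_coupled_reachable => [n /coupled_reach_swap hn]; exists n.
move=> u; split=> /Filter_coupled_reachable hu; apply/Filter_coupled_reachable.
  exact: (coupled_reachable_transfer robust_coupling_closed robust_coupled_reachable st hu).
have [n /coupled_reach_swap hn] := hu.
have [m hm] := coupled_reachable_transfer (coupling_closed_flip robust_coupling_closed)
  robust_flip_reach st (ex_intro _ n hn).
by exists m; apply: (coupled_reach_swap hm).
Qed.

Lemma Filter_refl s : Filter tau ell Q s s.
Proof. exact/Filter_coupled_reachable/coupled_reachable_diag. Qed.

Lemma Filter_sym s t : Filter tau ell Q s t -> Filter tau ell Q t s.
Proof.
move=> /Filter_coupled_reachable [n /coupled_reach_swap hn].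
by apply/Filter_coupled_reachable; exists n.
Qed.

Lemma Refine_bisimulation : bisimulation tau ell (Refine tau ell Q).
Proof. exact/Bisim_bisimulation/Prune_equivalence/Filter_sym/Filter_refl. Qed.

Lemma robust_sub_Refine : rel_incl (robust tau ell) (Refine tau ell Q).
Proof.
move=> s t st; exists (clos_refl_sym_trans S (robust tau ell)); split.
  exact/equiv_closure_bisimulation/robust_coupling_closed.
split; last exact: rst_step.
apply: equiv_closure_incl robust_Prune_Filter.
exact/Prune_equivalence/Filter_sym/Filter_refl.
Qed.

End Filter.

End LabelledMarkovChain.

Theorem proposition8 (R : realType) (S : finType) (L : Type)
  (tau : S -> S -> R) (ell : S -> L)
  (hLMC : is_LMC tau) (hlab : exists s t : S, ell s <> ell t)
  (Q : relS S) :
  bisimulation tau ell Q ->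
  rel_incl (robust tau ell) Q -> rel_incl Q (bisimilar tau ell) ->
  bisimulation tau ell (Refine tau ell Q) /\
  rel_incl (robust tau ell) (Refine tau ell Q) /\
  rel_incl (Refine tau ell Q) (bisimilar tau ell).
Proof.
move=> hQ robust_Q _; split; first exact: Refine_bisimulation.
split; first exact: robust_sub_Refine.
by move=> s t [B [hB [_ st]]]; exists B.
Qed.
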